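(* Let $n\geq0$ be an integer. Then $\dim_{\mathbb C}\big(\mathscr M_n(x_1)\cap\mathscr M_n(x_2)\cap\mathscr M_n(x_3)\big)=0$ if $n<t_1+t_2+t_3$, and equals $2(n-t_1-t_2-t_3+1)$ if $n\geq t_1+t_2+t_3$.
   Context: Fix real numbers $k_1,k_2,k_3$. For $i=1,2,3$ let $R_i$ be the operator on functions on $\mathbb R^3$ replacing $x_i$ by $-x_i$, and $T_if=\frac{\partial f}{\partial x_i}+k_i\frac{f-R_if}{x_i}$ (Dunkl operators). Let $\sigma_1=\begin{pmatrix}0&1\\1&0\end{pmatrix}$, $\sigma_2=\begin{pmatrix}0&-\sqrt{-1}\\ \sqrt{-1}&0\end{pmatrix}$, $\sigma_3=\begin{pmatrix}1&0\\0&-1\end{pmatrix}$, and let $e_i$ act on $\mathbb C^2$ by $\sigma_i$. Tensor products are over $\mathbb R$; $\mathbb R[\cdots]_m$ denotes homogeneous polynomials of degree $m$. Let $\mathbf D=e_1\otimes T_1+e_2\otimes T_2+e_3\otimes T_3$ and $\mathscr M_n=\ker(\mathbf D|_{\mathbb C^2\otimes\mathbb R[x_1,x_2,x_3]_n})$. For $i=1,2,3$ set $t_i=-2k_i$ if $2k_i$ is an odd negative integer, and $t_i=\infty$ otherwise (with the usual conventions for sums and comparisons with $\infty$). For $i=1,2,3$, $\mathscr M_n(x_i)=\mathscr M_n\cap\bigoplus_{j=t_i}^n\mathbb C^2\otimes(x_i^j\cdot\mathbb R[x_p,x_q]_{n-j})$ where $\{p,q\}=\{1,2,3\}\setminus\{i\}$,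 interpreted as $\{0\}$ if $n<t_i$. *)

From HB Require Import structures.
From mathcomp Require Import all_boot all_order all_algebra.
From mathcomp Require Import reals.
From mathcomp Require Import complex.
From mathcomp Require Import mpoly.

Set Implicit Arguments.
Unset Strict Implicit.
Unset Printing Implicit Defensive.

Import Order.TTheory GRing.Theory Num.Theory.
Local Open Scope ring_scope.

Definition has_dim (K : fieldType) (V : lmodType K) (S : V -> Prop) (d : nat) : Prop :=
  exists b : 'I_d -> V,
    [/\ (forall j, S (b j)),
        (forall c : 'I_d -> K, \sum_(j < d) c j *: b j = 0 -> forall j, c j = 0)
      & (forall v, S v -> exists c : 'I_d -> K, v = \sum_(j < d) c j *: b j)].

Section Dunkl.
Variable R : realType.
Local Notation C := (R[i]).
Local Notation P := {mpoly C[3]}.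

Definition refl (i : 'I_3) (p : P) : P :=
  comp_mpoly [tuple (if j == i then - 'X_j else 'X_j) | j < 3] p.

(* division by x_i (exact on polynomials all of whose monomials contain x_i,
   e.g. f - R_i f) *)
Definition divX (i : 'I_3) (q : P) : P :=
  \sum_(m <- msupp q) q@_m *: 'X_[m - U_(i)].

Definition dunkl (k : R) (i : 'I_3) (p : P) : P :=
  mderiv i p + (k%:C)%C *: divX i (p - refl i p).

(* C^2 (x)_R R[x1,x2,x3] is identified with pairs of complex polynomials.
   e_1, e_2, e_3 act by the Pauli matrices sigma_1, sigma_2, sigma_3. *)
Definition Dirac (k1 k2 k3 : R) (v : P * P) : P * P :=
  let T1 := dunkl k1 0 in
  let T2 := dunkl k2 1 in
  let T3 := dunkl k3 2 in
  (T1 v.2 - ('i)%C *: T2 v.2 + T3 v.1,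
   T1 v.1 + ('i)%C *: T2 v.1 - T3 v.2).

(* t(k) = -2k if 2k is an odd negative integer, infinity (None) otherwise *)
Definition t_index (k : R) : option nat :=
  if ((- (2 * k)) \is a Num.nat) && odd (Num.truncn (- (2 * k)))
  then Some (Num.truncn (- (2 * k))) else None.

Definition Mn (k1 k2 k3 : R) (n : nat) (v : P * P) : Prop :=
  v.1 \is n.-homog /\ v.2 \is n.-homog /\ Dirac k1 k2 k3 v = 0.

(* M_n(x_i) = M_n /\ (+)_{j = t_i}^n C^2 (x) x_i^j R[x_p,x_q]_{n-j}
   ( = {0} when t_i = infinity ) *)
Definition Mnx (k1 k2 k3 : R) (n : nat) (i : 'I_3) (t : option nat) (v : P * P) : Prop :=
  Mn k1 k2 k3 n v /\
  match t with
  | Some ti => forall m, m \in msupp v.1 ++ msupp v.2 -> (ti <= m i)%N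
  | None => v = 0
  end.

Definition Mn123 (k1 k2 k3 : R) (n : nat) (v : P * P) : Prop :=
  [/\ Mnx k1 k2 k3 n 0 (t_index k1) v, Mnx k1 k2 k3 n 1 (t_index k2) v
    & Mnx k1 k2 k3 n 2 (t_index k3) v].

Definition expected_dim (n : nat) (t1 t2 t3 : option nat) : nat :=
  match t1, t2, t3 with
  | Some a, Some b, Some c =>
      if (n < a + b + c)%N then 0%N else (2 * (n - (a + b + c) + 1))%N
  | _, _, _ => 0%N
  end.

End Dunkl.

(* Each Dunkl operator acts on coefficients as a weighted shift,
   (T_i f)_m = w_i(m_i + 1) f_(m + e_i) with w_i(j) = j + k_i (1 - (-1)^j); when
   -2k_i = t_i is an odd positive integer, w_i(t_i) = 0 and w_i(j) <> 0 for j > t_i.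
   The Dirac equation is thus a pair of linear relations between coefficients.
   Since w_3 does not vanish above t_3, a solution supported in
   {m_1 >= t_1, m_2 >= t_2, m_3 >= t_3} is determined by its layer x_3^(t_3), and
   conversely any C^2-valued data on that layer extends to such a solution:
   w_3(t_3) = 0 leaves the layer unconstrained, and w_1(t_1) = w_2(t_2) = 0 keep the
   extension inside the region.  The layer has n - t_1 - t_2 - t_3 + 1 monomials of
   degree n, whence the dimension 2(n - t_1 - t_2 - t_3 + 1). *)

From mathcomp Require Import all_boot all_order all_algebra.
From mathcomp Require Import reals complex mpoly.
From mathcomp Require Import zify ring.

Set Implicit Arguments.
Unset Strict Implicit.
Unset Printing Implicit Defensive.

Import GRing.Theory Num.Theory.
Local Open Scope ring_scope.

Section Dimension.
Variables (K : fieldType) (V : lmodType K).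
Implicit Types (S : V -> Prop) (d : nat).

Lemma has_dim0 S : (forall v, S v -> v = 0) -> has_dim S 0.
Proof.
move=> S0; exists (fun=> 0); split=> [[] // | c _ [] // | v /S0 ->].
by exists (fun=> 0); rewrite big_ord0.
Qed.

Lemma eq_has_dim S S' d : (forall v, S v <-> S' v) -> has_dim S d -> has_dim S' d.
Proof.
move=> eqS [b [Sb freeb spanb]]; exists b; split=> // [j | v /eqS]; first exact/eqS.
exact: spanb.
Qed.

Lemma has_dim_dual_basis S d (b : 'I_d -> V) (coord : 'I_d -> V -> K) :
  S 0 -> (forall a u v, S u -> S v -> S (a *: u + v)) ->
  (forall i a u v, coord i (a *: u + v) = a * coord i u + coord i v) ->
  (forall j, S (b j)) -> (forall i j, coord i (b j) = (i == j)%:R) ->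
  (forall v, S v -> (forall i, coord i v = 0) -> v = 0) ->
  has_dim S d.
Proof.
move=> S0 S_lin coord_lin Sb coord_b coord_inj.
have coord0 i : coord i 0 = 0.
  by rewrite -(addNr 0) -scaleN1r coord_lin mulN1r addNr.
have coord_comb i c : coord i (\sum_(j < d) c j *: b j) = c i.
  transitivity (\sum_(j < d) c j * (i == j)%:R).
    apply: (big_rec2 (fun x y => coord i y = x)) => [|j x y _ <-].
      exact: coord0.
    by rewrite coord_lin coord_b.
  rewrite (bigD1 i) //= eqxx mulr1 big1 ?addr0 // => j.
  by rewrite eq_sym => /negbTE ->; rewrite mulr0.
have S_comb c : S (\sum_(j < d) c j *: b j).
  apply: big_ind => [//|u v Su Sv|j _]; first by rewrite -[u]scale1r; exact: S_lin.
  by rewrite -[_ *: _]addr0; exact: S_lin.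
exists b; split=> // [c c0 i | v Sv]; first by rewrite -coord_comb c0 coord0.
exists (fun j => coord j v); apply/eqP; rewrite eq_sym -subr_eq0 addrC.
rewrite -scaleN1r; apply/eqP/coord_inj => [|i]; first exact: S_lin.
by rewrite coord_lin coord_comb mulN1r addNr.
Qed.

End Dimension.

Section DunklCoefficients.
Variable R : realType.
Local Notation C := (R[i]).
Local Notation P := {mpoly C[3]}.
Implicit Types (p q : P) (m : 'X_{1..3}) (i : 'I_3) (k : R).

Lemma mcoeff_divX i q m : (forall m', m' i = 0%N -> q@_m' = 0) ->
  (divX i q)@_m = q@_(m + U_(i)).
Proof.
move=> q0; rewrite /divX [in RHS](mpolyE q) !raddf_sum /=.
apply: eq_bigr => m' _; rewrite !mcoeffZ !mcoeffX.
have [/q0 -> | m'i_gt0] := posnP (m' i); first by rewrite !mul0r.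
congr (_ * (nat_of_bool _)%:R); apply/eqP/eqP => [<- | ->]; apply/mnmP => j;
  by rewrite !(mnmBE, mnmDE, mnm1E); case: (eqVneq i j) => [<-|_] /=; lia.
Qed.

Lemma refl_mpolyX i m : refl i 'X_[m] = (-1) ^+ (m i) *: ('X_[m] : P).
Proof.
rewrite /refl comp_mpolyX mpolyXE_id (bigD1 i) //= [in RHS](bigD1 i) //=.
rewrite tnth_mktuple eqxx -scaleN1r exprZn -scalerAl; congr (_ *: (_ * _)).
by apply: eq_bigr => j /negbTE ji; rewrite tnth_mktuple ji.
Qed.

Lemma mcoeff_refl i p m : (refl i p)@_m = (-1) ^+ (m i) * p@_m.
Proof.
rewrite [in RHS](mpolyE p) /refl comp_mpolyEX !raddf_sum mulr_sumr.
apply: eq_bigr => m' _; rewrite -/(refl i _) refl_mpolyX scalerA.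
by rewrite /= !mcoeffZ !mcoeffX; case: eqP => [->|_]; rewrite ?mulr1 ?mulr0 // mulrC.
Qed.

Definition dunkl_weight k (j : nat) : C := j%:R + (k%:C)%C * (1 - (-1) ^+ j).

Lemma mcoeff_dunkl k i p m :
  (dunkl k i p)@_m = dunkl_weight k (m i).+1 * p@_(m + U_(i)).
Proof.
rewrite /dunkl mcoeffD mcoeffZ mcoeff_deriv mcoeff_divX => [|m' m'i0]; last first.
  by rewrite mcoeffB mcoeff_refl m'i0 mul1r subrr.
rewrite mcoeffB mcoeff_refl mnmDE mnm1E eqxx addn1 /dunkl_weight.
by rewrite mulrDl mulr_natl -mulrA mulrBl mul1r.
Qed.

Lemma t_indexP k t : t_index k = Some t -> odd t /\ (k%:C)%C *+ 2 = - t%:R.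
Proof.
rewrite /t_index; case: ifP => // /andP[/truncnK kt odd_t] [<-]; split=> //.
by rewrite -rmorphMn -mulr_natl -(rmorph_nat (real_complex R)) -rmorphN kt opprK.
Qed.

Lemma dunkl_weightE k t j : t_index k = Some t ->
  dunkl_weight k j = j%:R - (odd j * t)%:R.
Proof.
case/t_indexP=> _ kt; rewrite /dunkl_weight -signr_odd.
case: (odd j); last by rewrite expr0 subrr mulr0 mul0n addr0 subr0.
by rewrite expr1 opprK mul1n -mulr2n mulrnAr mulr1 kt.
Qed.

Lemma dunkl_weight_t_index k t : t_index k = Some t -> dunkl_weight k t = 0.
Proof.
by move=> kt; rewrite (dunkl_weightE _ kt); have [-> _] := t_indexP kt; rewrite mul1n subrr.
Qed.

Lemma dunkl_weight_neq0 k t j : t_index k = Some t -> (t < j)%N ->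
  dunkl_weight k j != 0.
Proof.
move=> kt t_lt_j; rewrite (dunkl_weightE _ kt) -natrB; last by case: (odd j); lia.
by rewrite pnatr_eq0; case: (odd j); lia.
Qed.

End DunklCoefficients.

Lemma mnmDU n (m : 'X_{1..n}) i j : (m + U_(i))%MM j = (m j + (i == j))%N.
Proof. by rewrite mnmDE mnm1E. Qed.

Definition mnm3 (a b c : nat) : 'X_{1..3} := [multinom nth 0%N [:: a; b; c] i | i < 3].

Lemma mnm3_eta (m : 'X_{1..3}) : m = mnm3 (m 0) (m 1) (m 2).
Proof. by apply/mnmP => -[[|[|[|i]]] lt_i3]; rewrite mnmE //=; congr (m _); apply: val_inj. Qed.

Lemma mdeg_mnm3 a b c : mdeg (mnm3 a b c) = (a + b + c)%N.
Proof. by rewrite mdegE !big_ord_recr big_ord0 !mnmE. Qed.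

Section HomogOfCoef.
Variables (R : ringType) (k n : nat).

Definition homog_of_coef (g : 'X_{1..k} -> R) : {mpoly R[k]} :=
  \sum_(m : 'X_{1..k < n.+1}) (if mdeg m == n then g m else 0) *: 'X_[m].

Lemma mcoeff_homog_of_coef g m :
  (homog_of_coef g)@_m = if mdeg m == n then g m else 0.
Proof.
have [m_small | m_big] := ltnP (mdeg m) n.+1.
  exact: (mcoeff_mpoly (fun m => if mdeg m == n then g m else 0) m_small).
rewrite (_ : mdeg m == n = false) /homog_of_coef ?raddf_sum /=; last by apply/eqP; lia.
apply: big1 => m' _; rewrite mcoeffZ mcoeffX (_ : val m' == m = false) ?mulr0 //.
by apply/eqP => m'm; have := bmdeg m'; rewrite m'm; lia.
Qed.

Lemma homog_of_coef_homog g : homog_of_coef g \is n.-homog.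
Proof.
apply/dhomogP => m; rewrite mcoeff_msupp mcoeff_homog_of_coef.
by case: (mdeg m =P n) => // _; rewrite eqxx.
Qed.

End HomogOfCoef.

Section WeightedDirac.
Variable R : rcfType.
Local Notation C := (R[i]).
Local Notation P := {mpoly C[3]}.
Variables (c1 c2 c3 : nat -> C) (T1 T2 T3 : P -> P).
Implicit Types (m : 'X_{1..3}) (p : P) (v : P * P).

Hypothesis mcoeffT1 : forall p m, (T1 p)@_m = c1 (m 0).+1 * p@_(m + U_(0)).
Hypothesis mcoeffT2 : forall p m, (T2 p)@_m = c2 (m 1).+1 * p@_(m + U_(1)).
Hypothesis mcoeffT3 : forall p m, (T3 p)@_m = c3 (m 2).+1 * p@_(m + U_(2)).

Definition dirac (v : P * P) : P * P :=
  (T1 v.2 - 'i%C *: T2 v.2 + T3 v.1, T1 v.1 + 'i%C *: T2 v.1 - T3 v.2).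

Section CoefficientEquations.
Variables (g1 g2 : 'X_{1..3} -> C).

Definition dirac_coef1 (m : 'X_{1..3}) : C :=
  c1 (m 0).+1 * g2 (m + U_(0%R))%MM - 'i%C * (c2 (m 1).+1 * g2 (m + U_(1%R))%MM)
  + c3 (m 2).+1 * g1 (m + U_(2%R))%MM.

Definition dirac_coef2 (m : 'X_{1..3}) : C :=
  c1 (m 0).+1 * g1 (m + U_(0%R))%MM + 'i%C * (c2 (m 1).+1 * g1 (m + U_(1%R))%MM)
  - c3 (m 2).+1 * g2 (m + U_(2%R))%MM.

Definition dirac_eqs : Prop := forall m, dirac_coef1 m = 0 /\ dirac_coef2 m = 0.

End CoefficientEquations.

Lemma mcoeff_dirac v m :
  (dirac v).1@_m = dirac_coef1 (fun m => v.1@_m) (fun m => v.2@_m) m /\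
  (dirac v).2@_m = dirac_coef2 (fun m => v.1@_m) (fun m => v.2@_m) m.
Proof.
by split; rewrite /= !(mcoeffD, mcoeffB, mcoeffN, mcoeffZ, mcoeffT1, mcoeffT2, mcoeffT3).
Qed.

Lemma dirac_eq0P v :
  dirac v = 0 <-> dirac_eqs (fun m => v.1@_m) (fun m => v.2@_m).
Proof.
split=> [v0 m | eqs_v]; first by have [<- <-] := mcoeff_dirac v m; rewrite v0 !mcoeff0.
congr pair; apply/mpolyP => m; have [e1 e2] := mcoeff_dirac v m.
- by rewrite e1 (eqs_v m).1 mcoeff0.
- by rewrite e2 (eqs_v m).2 mcoeff0.
Qed.

Lemma dirac_lin a u v : dirac (a *: u + v) = a *: dirac u + dirac v.
Proof.
congr pair; apply/mpolyP => m;
  by rewrite /= !(mcoeffD, mcoeffB, mcoeffN, mcoeffZ, mcoeffT1, mcoeffT2, mcoeffT3); ring.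
Qed.

Lemma dirac_eqs_step (g1 g2 : 'X_{1..3} -> C) m : dirac_eqs g1 g2 -> c3 (m 2).+1 != 0 ->
  g1 (m + U_(0%R))%MM = 0 /\ g2 (m + U_(0%R))%MM = 0 ->
  g1 (m + U_(1%R))%MM = 0 /\ g2 (m + U_(1%R))%MM = 0 ->
  g1 (m + U_(2%R))%MM = 0 /\ g2 (m + U_(2%R))%MM = 0.
Proof.
move=> eqs c3_nz [z10 z20] [z11 z21]; have [] := eqs m.
rewrite /dirac_coef1 /dirac_coef2 z10 z20 z11 z21 !mulr0 subrr !add0r.
move=> /eqP + /eqP; rewrite oppr_eq0 !mulf_eq0 (negbTE c3_nz) /=.
by move=> /eqP -> /eqP ->.
Qed.

Section Layers.
Variables (ta tb tc : nat).
Hypotheses (c1_ta : c1 ta = 0) (c2_tb : c2 tb = 0) (c3_tc : c3 tc = 0)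
  (c3_neq0 : forall j, (tc < j)%N -> c3 j != 0).

Lemma dirac_eqs_eq0 (g1 g2 : 'X_{1..3} -> C) : dirac_eqs g1 g2 ->
  (forall m, (m 2%R <= tc)%N -> g1 m = 0 /\ g2 m = 0) ->
  forall m, g1 m = 0 /\ g2 m = 0.
Proof.
move=> eqs low m.
suff {m} H j m : m 2%R = j -> g1 m = 0 /\ g2 m = 0 by exact: H.
elim: j m => [|j IH] m mj; first by apply: low; rewrite mj.
have [|tc_lt] := leqP (m 2%R) tc; first exact: low.
have -> : m = (m - U_(2%R) + U_(2%R))%MM.
  by apply/mnmP => i; rewrite mnmDU mnmBE mnm1E; case: eqP => [<-|] /=; lia.
have m'2 : (m - U_(2%R))%MM 2%R = j by rewrite mnmBE mnm1E /=; lia.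
apply: dirac_eqs_step => //; first by rewrite m'2 c3_neq0 // -mj.
all: by apply: IH; rewrite mnmDU m'2 /= addn0.
Qed.

(* The coefficient of [x1^a x2^b x3^j] of the solution whose layer [x3^tc] is
   [init], solved from the Dirac equations at [x1^a x2^b x3^(j-1)]. *)
Fixpoint ext_coef (init : nat -> nat -> C * C) (j a b : nat) {struct j} : C * C :=
  if (j < tc)%N then (0, 0) else if j == tc then init a b else
  if j is j'.+1 then
    let u := ext_coef init j' a.+1 b in
    let w := ext_coef init j' a b.+1 in
    (- (c3 j)^-1 * (c1 a.+1 * u.2 - 'i%C * (c2 b.+1 * w.2)),
     (c3 j)^-1 * (c1 a.+1 * u.1 + 'i%C * (c2 b.+1 * w.1)))
  else (0, 0).

Lemma ext_coef_lt init j a b : (j < tc)%N -> ext_coef init j a b = (0, 0).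
Proof. by case: j => [|j] /= ->. Qed.

Lemma ext_coef_tc init a b : ext_coef init tc a b = init a b.
Proof.
suff H j : j = tc -> ext_coef init j a b = init a b by exact: H.
by case: j => [|j] jtc /=; rewrite -jtc ltnn eqxx.
Qed.

Lemma ext_coef_eqs init :
  dirac_eqs (fun m => (ext_coef init (m 2) (m 0) (m 1)).1)
            (fun m => (ext_coef init (m 2) (m 0) (m 1)).2).
Proof.
move=> m; rewrite /dirac_coef1 /dirac_coef2 !mnmDU /= !addn0 !addn1.
case: (ltngtP (m 2%R).+1 tc) => [lt_tc | gt_tc | eq_tc].
- by rewrite !ext_coef_lt //= 1?ltnW //; split; ring.
- have c3_nz := c3_neq0 gt_tc.
  by rewrite /= ltnNge (ltnW gt_tc) gtn_eqF //=; split; field.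
- have lt_tc : (m 2%R < tc)%N by rewrite -eq_tc.
  by rewrite eq_tc c3_tc !(ext_coef_lt init _ _ lt_tc) /=; split; ring.
Qed.

Lemma ext_coef_cone init :
  (forall a b, (a < ta)%N || (b < tb)%N -> init a b = (0, 0)) ->
  forall j a b, (a < ta)%N || (b < tb)%N -> ext_coef init j a b = (0, 0).
Proof.
move=> init0; elim=> [|j IH] a b ab_out /=.
  by case: ifP => // _; case: ifP => // _; exact: init0.
case: ifP => // _; case: ifP => _; first exact: init0.
have c1_or_IH : c1 a.+1 = 0 \/ ext_coef init j a.+1 b = (0, 0).
  by case: (ltngtP a.+1 ta) => [|?|->]; [right; apply: IH; lia | right; apply: IH; lia | left].
have c2_or_IH : c2 b.+1 = 0 \/ ext_coef init j a b.+1 = (0, 0).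
  by case: (ltngtP b.+1 tb) => [|?|->]; [right; apply: IH; lia | right; apply: IH; lia | left].
by case: c1_or_IH => ->; case: c2_or_IH => ->; congr (_, _); rewrite /=; ring.
Qed.

Section Degree.
Variable n : nat.

Definition sol_of_layer init : P * P :=
  (homog_of_coef n (fun m => (ext_coef init (m 2) (m 0) (m 1)).1),
   homog_of_coef n (fun m => (ext_coef init (m 2) (m 0) (m 1)).2)).

Lemma dirac_sol_of_layer init : dirac (sol_of_layer init) = 0.
Proof.
apply/dirac_eq0P => m; rewrite /dirac_coef1 /dirac_coef2 /=.
rewrite !mcoeff_homog_of_coef !mdegD !mdeg1.
by case: eqP => _; [exact: ext_coef_eqs | split; ring].
Qed.

Definition cone m := [&& ta <= m 0%R, tb <= m 1%R & tc <= m 2%R]%N.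

Lemma sol_of_layer_cone init :
  (forall a b, (a < ta)%N || (b < tb)%N -> init a b = (0, 0)) ->
  forall m, ~~ cone m -> (sol_of_layer init).1@_m = 0 /\ (sol_of_layer init).2@_m = 0.
Proof.
move=> init0 m m_out; rewrite /= !mcoeff_homog_of_coef; case: eqP => // _.
have [m2_lt | m2_ge] := ltnP (m 2%R) tc; first by rewrite ext_coef_lt.
by rewrite (ext_coef_cone init0) //; move: m_out; rewrite /cone m2_ge; lia.
Qed.

Definition sol_space v : Prop :=
  [/\ v.1 \is n.-homog, v.2 \is n.-homog, dirac v = 0
    & forall m, ~~ cone m -> v.1@_m = 0 /\ v.2@_m = 0].

Lemma sol_space0 : sol_space 0.
Proof.
split; rewrite ?rpred0 //; last by move=> m _; rewrite /= mcoeff0.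
by apply/dirac_eq0P => m; rewrite /dirac_coef1 /dirac_coef2 /= !mcoeff0; split; ring.
Qed.

Lemma sol_space_lin a u v : sol_space u -> sol_space v -> sol_space (a *: u + v).
Proof.
move=> [u1 u2 Du u_cone] [v1 v2 Dv v_cone]; split=> /=.
- by rewrite rpredD ?rpredZ.
- by rewrite rpredD ?rpredZ.
- by rewrite dirac_lin Du Dv scaler0 addr0.
- move=> m m_out; rewrite !(mcoeffD, mcoeffZ).
  by have [-> ->] := u_cone m m_out; have [-> ->] := v_cone m m_out; rewrite mulr0 addr0.
Qed.

Lemma sol_of_layer_sol init :
  (forall a b, (a < ta)%N || (b < tb)%N -> init a b = (0, 0)) ->
  sol_space (sol_of_layer init).
Proof.
move=> init0; split; rewrite ?homog_of_coef_homog ?dirac_sol_of_layer //.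
exact: sol_of_layer_cone.
Qed.

Let d := (n.+1 - (ta + tb + tc))%N.

Definition layer_mnm s := mnm3 (ta + s) (tb + (d - 1 - s)) tc.

Lemma layer_mnm_inj s s' : (layer_mnm s == layer_mnm s') = (s == s').
Proof.
apply/eqP/eqP => [/mnmP/(_ 0%R) | -> //].
by rewrite !mnmE => /addnI.
Qed.

(* An index [j : 'I_(d + d)] stands for the layer monomial [layer_mnm s], s < d,
   in the first (j = s) or the second (j = d + s) component. *)
Definition delta_init (j : 'I_(d + d)) (a b : nat) : C * C :=
  match split j with
  | inl s => ((mnm3 a b tc == layer_mnm s)%:R, 0)
  | inr s => (0, (mnm3 a b tc == layer_mnm s)%:R)
  end.

Definition layer_coord (j : 'I_(d + d)) v : C :=
  match split j with
  | inl s => v.1@_(layer_mnm s)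
  | inr s => v.2@_(layer_mnm s)
  end.

Lemma delta_init_cone j a b : (a < ta)%N || (b < tb)%N -> delta_init j a b = (0, 0).
Proof.
move=> ab_out; have mnm3_out s : (mnm3 a b tc == layer_mnm s) = false.
  by apply/eqP => /mnmP e; move: ab_out (e 0%R) (e 1%R); rewrite !mnmE /=; lia.
by rewrite /delta_init; case: split => s; rewrite mnm3_out.
Qed.

Lemma layer_coord_lin i a u v :
  layer_coord i (a *: u + v) = a * layer_coord i u + layer_coord i v.
Proof. by rewrite /layer_coord; case: split => s; rewrite /= mcoeffD mcoeffZ. Qed.

Lemma mdeg_layer_mnm (s : 'I_d) : mdeg (layer_mnm s) = n.
Proof. by rewrite mdeg_mnm3; have := ltn_ord s; rewrite /d; lia. Qed.

Lemma layer_coord_delta i j :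
  layer_coord i (sol_of_layer (delta_init j)) = (i == j)%:R.
Proof.
rewrite -(can_eq splitK) /layer_coord.
case: (split i) => s; rewrite /= mcoeff_homog_of_coef mdeg_layer_mnm eqxx !mnmE /=;
  rewrite ext_coef_tc /delta_init -/(layer_mnm s); case: (split j) => s' /=;
  by rewrite ?layer_mnm_inj.
Qed.

Lemma layer_coord_inj v : sol_space v -> (forall i, layer_coord i v = 0) -> v = 0.
Proof.
move=> [v1 v2 Dv v_cone] coord0.
suff v0 m : v.1@_m = 0 /\ v.2@_m = 0.
  by apply: injective_projections; apply/mpolyP => m; rewrite mcoeff0 ?(v0 m).1 ?(v0 m).2.
apply: (dirac_eqs_eq0 ((dirac_eq0P v).1 Dv)) => {}m m2_le.
have [/and3P[m0_ge m1_ge m2_ge] | /v_cone //] := boolP (cone m).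
have [deg_n | deg_ne] := eqVneq (mdeg m) n; last by rewrite !(dhomog_nemf_coeff _ deg_ne).
have deg3 : (m 0%R + m 1%R + m 2%R)%N = n by rewrite -mdeg_mnm3 -mnm3_eta.
have s_lt : (m 0%R - ta < d)%N by rewrite /d; lia.
have -> : m = layer_mnm (Ordinal s_lt).
  by rewrite [LHS]mnm3_eta /layer_mnm /d /=; congr mnm3; lia.
split; [have := coord0 (lshift d (Ordinal s_lt)) | have := coord0 (rshift d (Ordinal s_lt))];
  by rewrite /layer_coord (unsplitK (inl _)) || rewrite /layer_coord (unsplitK (inr _)).
Qed.

Lemma has_dim_sol_space : has_dim sol_space (d + d).
Proof.
apply: (@has_dim_dual_basis _ _ _ _ (fun j => sol_of_layer (delta_init j)) layer_coord).
- exact: sol_space0.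
- exact: sol_space_lin.
- exact: layer_coord_lin.
- by move=> j; apply: sol_of_layer_sol; exact: delta_init_cone.
- exact: layer_coord_delta.
- exact: layer_coord_inj.
Qed.

End Degree.

End Layers.

End WeightedDirac.

Lemma msupp_pair_subsetP (R : ringType) k (P : pred 'X_{1..k})
    (v : {mpoly R[k]} * {mpoly R[k]}) :
  (forall m, ~~ P m -> v.1@_m = 0 /\ v.2@_m = 0) <-> {subset msupp v.1 ++ msupp v.2 <= P}.
Proof.
split=> [v0 m | vP m].
  by rewrite mem_cat !mcoeff_msupp; apply: contraTT => /v0 [-> ->]; rewrite eqxx.
by move=> Pm_out; split; apply/eqP; move: Pm_out; apply: contraNT => nz;
  apply: vP; rewrite mem_cat !mcoeff_msupp nz ?orbT.
Qed.

Lemma sol_space_Mn123 (R : realType) (k1 k2 k3 : R) n ta tb tc v :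
  t_index k1 = Some ta -> t_index k2 = Some tb -> t_index k3 = Some tc ->
  sol_space (dunkl k1 0) (dunkl k2 1) (dunkl k3 2) ta tb tc n v <-> Mn123 k1 k2 k3 n v.
Proof.
move=> k1t k2t k3t; rewrite /Mn123 /Mnx /Mn k1t k2t k3t.
split=> [[v1 v2 Dv /msupp_pair_subsetP v_cone] | [[[v1 [v2 Dv]] ta_le] [_ tb_le] [_ tc_le]]].
  by split; split=> // m /v_cone /and3P[].
split=> //; apply/msupp_pair_subsetP => m m_supp.
by apply/and3P; split; [exact: ta_le | exact: tb_le | exact: tc_le].
Qed.

Theorem proposition3p5 (R : realType) (k1 k2 k3 : R) (n : nat) :
  has_dim (Mn123 k1 k2 k3 n) (expected_dim n (t_index k1) (t_index k2) (t_index k3)).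
Proof.
case k1t: (t_index k1) => [ta|]; last by apply: has_dim0 => v [[_]]; rewrite k1t.
case k2t: (t_index k2) => [tb|]; last by apply: has_dim0 => v [_ [_]]; rewrite k2t.
case k3t: (t_index k3) => [tc|]; last by apply: has_dim0 => v [_ _ [_]]; rewrite k3t.
have -> : expected_dim n (Some ta) (Some tb) (Some tc) =
    (n.+1 - (ta + tb + tc) + (n.+1 - (ta + tb + tc)))%N.
  by rewrite /expected_dim; case: ifP; lia.
apply: (eq_has_dim (fun v => sol_space_Mn123 n v k1t k2t k3t)).
exact: (has_dim_sol_space (mcoeff_dunkl k1 0) (mcoeff_dunkl k2 1) (mcoeff_dunkl k3 2)
  (dunkl_weight_t_index k1t) (dunkl_weight_t_index k2t) (dunkl_weight_t_index k3t)
  (fun j => dunkl_weight_neq0 (j := j) k3t)).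
Qed.
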